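(* Let $n\in\mathbb{N}$, let $f\colon[0,1]^n\to[0,1]$ be an aggregation function, and let $\mathbf{a}=(a_0,\dots,a_{n-1})\in[0,1]^n$ with $\mathbf{a}\neq(0,\dots,0)$ and $\mathbf{a}\neq(1,\dots,1)$. Put $J_{\mathbf{a}}=\{i: a_i\neq0\}$ and define $h^f_{\mathbf{a}}(\mathbf{x})=G^n_{f(\mathbf{a})}(\mathbf{x})\wedge\bigwedge_{i\in J_{\mathbf{a}}}\chi_{a_i}(x_i)$. Then $h^f_{\mathbf{a}}$ is an aggregation function and for all $\mathbf{x}\in[0,1]^n$: $h^f_{\mathbf{a}}(\mathbf{x})=1$ if $\mathbf{x}=(1,\dots,1)$; $h^f_{\mathbf{a}}(\mathbf{x})=f(\mathbf{a})$ if $\mathbf{x}\ge\mathbf{a}$ (coordinatewise) and $\mathbf{x}\neq(1,\dots,1)$; and $h^f_{\mathbf{a}}(\mathbf{x})=0$ if $\mathbf{x}\not\ge\mathbf{a}$.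
   Context: An $n$-ary aggregation function on $[0,1]$ is a function $f\colon[0,1]^n\to[0,1]$ nondecreasing in each coordinate with $f(0,\dots,0)=0$ and $f(1,\dots,1)=1$. For $a\in[0,1]$, $\chi_a(x)=1$ if $x\ge a$ and $x\neq0$, and $\chi_a(x)=0$ otherwise. $\mathsf{Med}_b(x,y)$ is the median of $x,y,b$. For $b\in[0,1]$, $G^n_b\colon[0,1]^n\to[0,1]$ is defined inductively by $G^1_b(x_0)=\mathsf{Med}_b(\chi_0(x_0),\chi_1(x_0))$, $G^2_b(x_0,x_1)=\mathsf{Med}_b(\chi_0(x_0\vee x_1),\chi_1(x_0\wedge x_1))$, $G^{n+1}_b(x_0,\dots,x_n)=G^2_b(G^n_b(x_0,\dots,x_{n-1}),x_n)$ for $n\ge2$. *)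

From HB Require Import structures.
From mathcomp Require Import all_boot all_order all_algebra.
Set Implicit Arguments. Unset Strict Implicit. Unset Printing Implicit Defensive.
Import Order.TTheory GRing.Theory Num.Theory.
Local Open Scope ring_scope.

Section Defs.
Variable R : realFieldType.

Definition in01 (x : R) : Prop := 0 <= x <= 1.

Definition in_cube (n : nat) (x : 'I_n -> R) : Prop := forall i, in01 (x i).

(* n-ary aggregation function on [0,1] (only its values on [0,1]^n matter) *)
Definition is_aggregation (n : nat) (f : ('I_n -> R) -> R) : Prop :=
  (forall x, in_cube x -> in01 (f x)) /\
  (forall x y, in_cube x -> in_cube y -> (forall i, x i <= y i) -> f x <= f y) /\
  f (fun _ => 0) = 0 /\ f (fun _ => 1) = 1.

Definition chi (a x : R) : R := if (a <= x) && (x != 0) then 1 else 0.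

Definition Med (b x y : R) : R :=
  Order.max (Order.min x y) (Order.min (Order.max x y) b).

Definition G1 (b x0 : R) : R := Med b (chi 0 x0) (chi 1 x0).
Definition G2 (b x0 x1 : R) : R :=
  Med b (chi 0 (Order.max x0 x1)) (chi 1 (Order.min x0 x1)).

(* G on a list of arguments (x_0, ..., x_{n-1}); G^{n+1} = G^2(G^n(...), x_n) *)
Definition Gseq (b : R) (s : seq R) : R :=
  match s with
  | [::] => 0 (* G^0 is not defined in the paper; value irrelevant *)
  | [:: x0] => G1 b x0
  | x0 :: x1 :: s' => foldl (G2 b) (G2 b x0 x1) s'
  end.

Definition Gn (n : nat) (b : R) (x : 'I_n -> R) : R :=
  Gseq b [seq x i | i <- enum 'I_n].

Definition hfa (n : nat) (f : ('I_n -> R) -> R) (a : 'I_n -> R)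
    (x : 'I_n -> R) : R :=
  Order.min (Gn (f a) x) (\big[Order.min/1]_(i | a i != 0) chi (a i) (x i)).

End Defs.

(* On [0,1], chi_0 and chi_1 are the indicators of x > 0 and x >= 1, so
   G^2_b(u, y) is 1 if u = y = 1, 0 if u = y = 0 and b otherwise; along the
   fold defining G^n_b this closed form propagates, so G^n_b(x) is 1 at
   (1,...,1), 0 at (0,...,0) and b elsewhere.  For a_i > 0, chi_{a_i}(x_i) is
   the indicator of a_i <= x_i, so the meet over J_a is the indicator of
   x >= a, and x >= a rules out x = 0 because a <> 0.  The resulting
   three-valued closed form of h^f_a gives every claim. *)

From HB Require Import structures.
From mathcomp Require Import all_boot all_order all_algebra.
Import Order.TTheory GRing.Theory Num.Theory.
Local Open Scope ring_scope.

Section ClosedForms.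
Variable R : realFieldType.
Implicit Types (a b u y z : R) (s : seq R).

Lemma chi0E z : chi 0 z = (0 < z)%R%:R.
Proof. by rewrite /chi lt_def andbC; case: ifP. Qed.

Lemma chi_gt0E a z : 0 < a -> chi a z = (a <= z)%R%:R.
Proof.
move=> a_gt0; rewrite /chi; have [az|] /= := leP a z; last by [].
by rewrite gt_eqF // (lt_le_trans a_gt0 az).
Qed.

Lemma Med_natr b (p q : bool) : in01 b ->
  Med b p%:R q%:R = if p && q then 1 else if p || q then b else 0.
Proof.
case/andP=> b0 b1; rewrite /Med.
by case: p q => [] [] /=; rewrite ?minxx ?maxxx ?(min_l ler01) ?(min_r ler01)
  ?(max_l ler01) ?(max_r ler01) ?(min_r b1) ?(min_l b0) ?(max_l b1) ?(max_r b0) ?maxxx.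
Qed.

Definition Gclosed b s : R :=
  if all (>= 1) s then 1 else if has (> 0) s then b else 0.

Lemma G2E b u y : in01 b -> G2 b u y = Gclosed b [:: u; y].
Proof.
move=> b01; rewrite /G2 chi0E chi_gt0E ?ltr01 // lt_max le_min Med_natr //.
rewrite /Gclosed /= !andbT.
have [u1|_] := leP 1 u; last by rewrite /= !andbF !orbF.
by rewrite (lt_le_trans ltr01 u1) /= ?orbF.
Qed.

Lemma G1E b x : in01 b -> G1 b x = Gclosed b [:: x].
Proof.
move=> b01; rewrite /G1 chi0E chi_gt0E ?ltr01 // Med_natr //.
rewrite /Gclosed /= andbT orbF.
by have [x1|_] := leP 1 x; rewrite ?(lt_le_trans ltr01 x1) ?andbF ?orbF.
Qed.

Lemma has_gt0_all_ge1 s : s != [::] -> all (>= 1) s -> has (> 0) s.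
Proof. by case: s => // z s _ /andP[z1 _] /=; rewrite (lt_le_trans ltr01 z1). Qed.

Lemma G2_Gclosed b p y : in01 b -> p != [::] ->
  G2 b (Gclosed b p) y = Gclosed b (rcons p y).
Proof.
move=> b01 p_nil; rewrite G2E // /Gclosed all_rcons has_rcons.
have [p1|_] /= := boolP (all (>= 1) p).
  by rewrite has_gt0_all_ge1 //= lexx ltr01 !andbT !orbT.
have [p_pos|_] /= := boolP (has (> 0) p); last by rewrite ler10 ltxx andbF !orbF.
rewrite andbT orbF andbF orbT; case/andP: b01 => b0 b1.
case: ifP => [/andP[b_ge1 _]|_]; first by apply/le_anti; rewrite b_ge1 b1.
by case: ifP => // /norP[]; rewrite -leNgt => b_le0 _; apply/le_anti; rewrite b0 b_le0.
Qed.

Lemma foldl_G2_Gclosed b p s : in01 b -> p != [::] ->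
  foldl (G2 b) (Gclosed b p) s = Gclosed b (p ++ s).
Proof.
move=> b01 p_nil; elim/last_ind: s => [|s y IH]; first by rewrite cats0.
by rewrite foldl_rcons IH G2_Gclosed ?rcons_cat //; case: (p) p_nil.
Qed.

Lemma Gseq_Gclosed b s : in01 b -> s != [::] -> Gseq b s = Gclosed b s.
Proof.
move=> b01; case: s => [|x [|y s]] //= _; first exact: G1E.
by rewrite G2E // foldl_G2_Gclosed.
Qed.

Lemma all_map_enum (T : finType) (U : Type) (P : pred U) (x : T -> U) :
  all P [seq x i | i <- enum T] = [forall i, P (x i)].
Proof.
rewrite all_map; apply/allP/forallP => [allPx i | Px i _]; last exact: Px.
by apply: allPx; rewrite mem_enum.
Qed.

Lemma has_map_enum (T : finType) (U : Type) (P : pred U) (x : T -> U) :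
  has P [seq x i | i <- enum T] = [exists i, P (x i)].
Proof. by apply/negb_inj; rewrite -all_predC negb_exists all_map_enum. Qed.

Lemma GnE n b (x : 'I_n -> R) : in01 b -> (0 < n)%N ->
  Gn b x = if [forall i, 1 <= x i] then 1 else if [exists i, 0 < x i] then b else 0.
Proof.
move=> b01 n_gt0; rewrite /Gn Gseq_Gclosed //.
  by rewrite /Gclosed all_map_enum has_map_enum.
by rewrite -size_eq0 size_map size_enum_ord -lt0n.
Qed.

Lemma bigmin_natr (T : finType) (P B : pred T) :
  \big[Order.min/1]_(i | P i) (B i)%:R = [forall (i | P i), B i]%:R :> R.
Proof.
rewrite -big_andE; apply/esym/(big_morph (fun c : bool => c%:R)) => // [[] []] /=;
  by rewrite ?minxx ?(min_l ler01) ?(min_r ler01).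
Qed.

End ClosedForms.

Section Hfa.
Local Set Implicit Arguments. Local Unset Strict Implicit.
Variables (R : realFieldType) (n : nat) (f : ('I_n -> R) -> R) (a : 'I_n -> R).
Variable i0 : 'I_n.
Hypotheses (fa01 : in01 (f a)) (a_cube : in_cube a) (a_i0 : a i0 != 0).

Let a_pos i : a i != 0 -> 0 < a i.
Proof. by move=> a_nz; rewrite lt_def a_nz; case/andP: (a_cube i). Qed.

Lemma hfaE x : in_cube x ->
  hfa f a x = if [forall i, a i <= x i] then
                (if [forall i, x i == 1] then 1 else f a)
              else 0.
Proof.
move=> x_cube; have n_gt0 : (0 < n)%N := leq_ltn_trans (leq0n i0) (ltn_ord i0).
case/andP: fa01 => fa0 fa1.
have chiE i : a i != 0 -> chi (a i) (x i) = (a i <= x i)%R%:R by move/a_pos/chi_gt0E.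
rewrite /hfa (eq_bigr _ chiE) bigmin_natr GnE //.
have -> : [forall (i | a i != 0), a i <= x i] = [forall i, a i <= x i].
  apply: eq_forallb => i; have [->|//] := eqVneq (a i) 0.
  by case/andP: (x_cube i).
have -> : [forall i, 1 <= x i] = [forall i, x i == 1].
  by apply: eq_forallb => i; rewrite eq_le; case/andP: (x_cube i) => _ ->.
have [a_le_x|_] := boolP [forall i, a i <= x i]; last first.
  by rewrite min_r //; case: ifP => _; rewrite ?ler01 //; case: ifP.
have -> : [exists i, 0 < x i].
  by apply/existsP; exists i0; exact: lt_le_trans (a_pos a_i0) (forallP a_le_x i0).
by rewrite min_l //; case: ifP.
Qed.

Lemma hfa_in01 x : in_cube x -> in01 (hfa f a x).
Proof.
move=> x_cube; rewrite hfaE //.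
by case: ifP => _; [case: ifP => _ //|]; rewrite /in01 ?lexx ler01.
Qed.

Lemma hfa_homo x y : in_cube x -> in_cube y -> (forall i, x i <= y i) ->
  hfa f a x <= hfa f a y.
Proof.
move=> x_cube y_cube x_le_y; have /andP[hy0 _] := hfa_in01 y_cube.
rewrite [hfa f a x]hfaE //; have [a_le_x|//] := boolP [forall i, a i <= x i].
rewrite hfaE // (_ : [forall i, a i <= y i]); last first.
  by apply/forallP => i; exact: le_trans (forallP a_le_x i) (x_le_y i).
have [x1|_] := boolP [forall i, x i == 1]; last by case: ifP => _; case/andP: fa01.
rewrite (_ : [forall i, y i == 1]) //; apply/forallP => i.
have := x_le_y i; rewrite (eqP (forallP x1 i)) => y_ge1.
by rewrite eq_le y_ge1 andbT; case/andP: (y_cube i).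
Qed.

Lemma hfa_aggregation : is_aggregation (hfa f a).
Proof.
have c0 : in_cube (fun _ : 'I_n => 0 : R) by move=> i; rewrite /in01 lexx ler01.
have c1 : in_cube (fun _ : 'I_n => 1 : R) by move=> i; rewrite /in01 lexx ler01.
split; first exact: hfa_in01.
split; first exact: hfa_homo.
split; rewrite hfaE //.
  by rewrite ifF //; apply/negbTE/forallP => /(_ i0); rewrite leNgt a_pos.
rewrite ifT; last by apply/forallP => i; case/andP: (a_cube i).
by rewrite ifT //; apply/forallP.
Qed.

End Hfa.

Theorem lemma2 (R : realFieldType) (n : nat) (f : ('I_n -> R) -> R)
    (a : 'I_n -> R) :
  is_aggregation f -> in_cube a ->
  ~ (forall i, a i = 0) -> ~ (forall i, a i = 1) ->
  is_aggregation (hfa f a) /\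
  (forall x : 'I_n -> R, in_cube x ->
     ((forall i, x i = 1) -> hfa f a x = 1) /\
     ((forall i, a i <= x i) -> ~ (forall i, x i = 1) -> hfa f a x = f a) /\
     (~ (forall i, a i <= x i) -> hfa f a x = 0)).
Proof.
move=> f_agg a_cube a_nz _; have fa01 := f_agg.1 a a_cube.
have /existsP[i0 a_i0] : [exists i, a i != 0].
  by rewrite -negb_forall; apply: contra_notN a_nz => /forallP a0 i; apply/eqP.
split; first exact: hfa_aggregation fa01 a_cube a_i0.
move=> x x_cube; rewrite (hfaE fa01 a_cube a_i0 x_cube); split; [|split].
- move=> x1; rewrite ifT; last by apply/forallP => i; rewrite x1; case/andP: (a_cube i).
  by rewrite ifT //; apply/forallP => i; rewrite x1.
- move=> a_le_x x_ne1; rewrite ifT; last exact/forallP.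
  by rewrite ifF //; apply/negbTE/negP => /forallP x1; apply: x_ne1 => i; apply/eqP.
- by move=> a_nle_x; rewrite ifF //; apply/negbTE/negP => /forallP.
Qed.
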